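(* Fix a scenario $i$ and a binary vector $\bar{\boldsymbol{x}}\in\{0,1\}^{\mathcal{J}}$ with $\mathcal{J}^o:=\{j\in\mathcal{J}:\bar x_j=1\}\neq\emptyset$. Let $j_i^*=\arg\max_{j'\in\mathcal{J}^o}u_{ij'}$. Define $$\bar\lambda_i=r_{ij_i^*},\qquad \bar\mu_{ij}=\begin{cases}\big[\max_{j'\in\mathcal{J}^o\setminus\{j_i^*\}}r_{ij'}-\bar\lambda_i\big]_+ & j=j_i^*,\\ 0 & j\in\mathcal{J}\setminus\{j_i^*\},\end{cases}$$ $$\bar\nu_{ij}=\begin{cases}0 & j\in\mathcal{J}^o,\\ \big[r_{ij}-\bar\lambda_i-\sum_{k\in\mathcal{J}:u_{ik}>u_{ij}}\bar\mu_{ik}\big]_+ & j\in\mathcal{J}\setminus\mathcal{J}^o,\end{cases}$$ where $[z]_+=\max\{z,0\}$ and a maximum over the empty set is $-\infty$ (so that $\bar\mu_{ij_i^*}=0$ if $\mathcal{J}^o=\{j_i^*\}$). Then $(\bar\lambda_i,\bar{\boldsymbol\nu}_i,\bar{\boldsymbol\mu}_i)$ is an optimal solution of $\mathrm{[DSP}_i]$ at $\boldsymbol{x}=\bar{\boldsymbol x}$, and the optimal values satisfy $\phi_i(\bar{\boldsymbol x})=r_{ij_i^*}$, equal to the optimal value of $\mathrm{[DSP}_i]$.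
   Context: Let $\mathcal{J}$ be a finite set of options and fix a scenario index $i$. For each $j\in\mathcal{J}$ let $r_{ij}\in\mathbb{R}$ (reward) and $u_{ij}\in\mathbb{R}$ (utility) be given, with the utilities pairwise distinct: $u_{ij}\neq u_{ik}$ for $j\neq k$. For $\boldsymbol x\in\mathbb{R}^{\mathcal{J}}$, the choice subproblem $\mathrm{[SP}_i]$ is the linear program $$\phi_i(\boldsymbol x)=\max_{\boldsymbol y_i}\ \sum_{j\in\mathcal{J}}r_{ij}y_{ij}\ \text{ s.t. }\ \sum_{j\in\mathcal{J}}y_{ij}=1;\ \ y_{ij}\le x_j\ \forall j\in\mathcal{J};\ \ \sum_{j\in\mathcal{J}:u_{ij}<u_{ik}}y_{ij}+x_k\le 1\ \forall k\in\mathcal{J};\ \ y_{ij}\ge 0\ \forall j.$$ Its LP dual $\mathrm{[DSP}_i]$, with variables $\lambda_i\in\mathbb{R}$, $\boldsymbol\nu_i,\boldsymbol\mu_i\in\mathbb{R}_+^{\mathcal{J}}$, is $$\min\ \lambda_i+\sum_{j\in\mathcal{J}}\mu_{ij}+\sum_{j\in\mathcal{J}}(\nu_{ij}-\mu_{ij})x_j\ \text{ s.t. }\ r_{ij}-\lambda_i-\nu_{ij}-\sum_{k\in\mathcal{J}:u_{ik}>u_{ij}}\mu_{ik}\le 0\ \ \forall j\in\mathcal{J},\ \ \boldsymbol\nu_i,\boldsymbol\mu_i\ge 0.$$ *)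

From HB Require Import structures.
From mathcomp Require Import all_boot all_order all_algebra.
Set Implicit Arguments. Unset Strict Implicit. Unset Printing Implicit Defensive.
Import Order.TTheory GRing.Theory Num.Theory.
Local Open Scope ring_scope.

Section ChoiceLP.
Variables (R : realFieldType) (J : finType).

Definition posp (z : R) : R := Num.max z 0.

Definition SP_feasible (u : J -> R) (x y : J -> R) : Prop :=
  [/\ \sum_(j : J) y j = 1,
      (forall j, y j <= x j),
      (forall k, \sum_(j : J | u j < u k) y j + x k <= 1)
    & (forall j, 0 <= y j)].

Definition SP_obj (r : J -> R) (y : J -> R) : R := \sum_(j : J) r j * y j.

Definition SP_opt_value (r u : J -> R) (x : J -> R) (v : R) : Prop :=
  (exists y, SP_feasible u x y /\ SP_obj r y = v) /\
  (forall y, SP_feasible u x y -> SP_obj r y <= v).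

Definition DSP_feasible (r u : J -> R) (lam : R) (nu mu : J -> R) : Prop :=
  (forall j, r j - lam - nu j - \sum_(k : J | u j < u k) mu k <= 0) /\
  (forall j, 0 <= nu j /\ 0 <= mu j).

Definition DSP_obj (x : J -> R) (lam : R) (nu mu : J -> R) : R :=
  lam + \sum_(j : J) mu j + \sum_(j : J) (nu j - mu j) * x j.

Definition DSP_optimal (r u x : J -> R) (lam : R) (nu mu : J -> R) : Prop :=
  DSP_feasible r u lam nu mu /\
  (forall lam' nu' mu', DSP_feasible r u lam' nu' mu' ->
     DSP_obj x lam nu mu <= DSP_obj x lam' nu' mu').

Definition Jo (xbar : J -> R) : {set J} := [set j | xbar j == 1].

Definition lam_bar (r : J -> R) (jstar : J) : R := r jstar.

(* max over J^o \ {j*} of r, minus lambda, positive part; max over the empty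
   set is -oo, so the value is 0 in that case. For a nonempty set the max is
   seeded with an element of the set (which does not change it). *)
Definition mu_bar (r xbar : J -> R) (jstar : J) (j : J) : R :=
  if j == jstar then
    match [pick j' in Jo xbar :\ jstar] with
    | None => 0
    | Some j0 => posp (\big[Num.max/r j0]_(j' in Jo xbar :\ jstar) r j'
                       - lam_bar r jstar)
    end
  else 0.

Definition nu_bar (r u xbar : J -> R) (jstar : J) (j : J) : R :=
  if j \in Jo xbar then 0
  else posp (r j - lam_bar r jstar
             - \sum_(k : J | u j < u k) mu_bar r xbar jstar k).

End ChoiceLP.

(* Every feasible primal solution is dominated by every feasible dual solution
   (weak duality), so a primal-dual pair with equal objectives is optimal on
   both sides.  At a binary x the primal point e_{j*} is feasible with value
   r_{j*}, and the proposed dual point is feasible with the same objective: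
   the only nonzero mu sits at j*, where it is cancelled in the objective by
   x_{j*} = 1, and it is large enough to cover every j in J^o below j*. *)
From HB Require Import structures.
From mathcomp Require Import all_boot all_order all_algebra.
From mathcomp Require Import lra.
Set Implicit Arguments. Unset Strict Implicit. Unset Printing Implicit Defensive.
Import Order.TTheory GRing.Theory Num.Theory.
Local Open Scope ring_scope.

Section ChoiceDuality.
Variables (R : realFieldType) (J : finType) (r u : J -> R).

Lemma posp_ge0 (z : R) : 0 <= posp z.
Proof. by rewrite /posp le_max lexx orbT. Qed.

Lemma le_posp (z : R) : z <= posp z.
Proof. by rewrite /posp le_max lexx. Qed.

Lemma SP_DSP_weak_duality (x y : J -> R) (lam : R) (nu mu : J -> R) :
  SP_feasible u x y -> DSP_feasible r u lam nu mu ->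
  SP_obj r y <= DSP_obj x lam nu mu.
Proof.
move=> [y_sum1 y_le_x y_below y_ge0] [r_le dual_ge0].
have nu_ge0 j : 0 <= nu j by case: (dual_ge0 j).
have mu_ge0 j : 0 <= mu j by case: (dual_ge0 j).
have cross : \sum_j (\sum_(k | u j < u k) mu k) * y j
             = \sum_k mu k * \sum_(j | u j < u k) y j.
  under eq_bigr do rewrite mulr_suml.
  rewrite (exchange_big_dep predT) //=.
  by apply: eq_bigr => k _; rewrite mulr_sumr.
apply: (@le_trans _ _
  (\sum_j (lam + nu j + \sum_(k | u j < u k) mu k) * y j)).
  apply: ler_sum => j _; apply: ler_wpM2r => //; have := r_le j; lra.
under eq_bigr do rewrite !mulrDl.
rewrite !big_split /= -mulr_sumr y_sum1 mulr1 cross /DSP_obj.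
have nu_le : \sum_j nu j * y j <= \sum_j nu j * x j.
  by apply: ler_sum => j _; apply: ler_wpM2l.
have mu_le : \sum_k mu k * (\sum_(j | u j < u k) y j)
             <= \sum_k mu k - \sum_k mu k * x k.
  rewrite -sumrB; apply: ler_sum => k _.
  rewrite -{2}(mulr1 (mu k)) -mulrBr; apply: ler_wpM2l => //.
  by have := y_below k; lra.
have -> : \sum_j (nu j - mu j) * x j = \sum_j nu j * x j - \sum_j mu j * x j.
  by rewrite -sumrB; apply: eq_bigr => j _; rewrite mulrBl.
lra.
Qed.

Lemma optimal_of_eq_obj (x y : J -> R) (lam : R) (nu mu : J -> R) :
  SP_feasible u x y -> DSP_feasible r u lam nu mu ->
  DSP_obj x lam nu mu = SP_obj r y ->
  DSP_optimal r u x lam nu mu /\ SP_opt_value r u x (SP_obj r y).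
Proof.
move=> y_feas dual_feas obj_eq; split.
  split=> // lam' nu' mu' dual_feas'.
  by rewrite obj_eq; apply: SP_DSP_weak_duality.
split; first by exists y.
by move=> y' y'_feas; rewrite -obj_eq; apply: SP_DSP_weak_duality.
Qed.

Section BinaryPoint.
Variables (xbar : J -> R) (jstar : J).
Hypotheses (u_inj : forall j k : J, j != k -> u j != u k)
           (xbar_bin : forall j, xbar j = 0 \/ xbar j = 1)
           (jstar_in : jstar \in Jo xbar)
           (jstar_max : forall j', j' \in Jo xbar -> u j' <= u jstar).

Let mu := mu_bar r xbar jstar.
Let nu := nu_bar r u xbar jstar.

Lemma xbar_jstar : xbar jstar = 1.
Proof. by apply/eqP; move: jstar_in; rewrite inE. Qed.

Lemma xbar_notJo j : j \notin Jo xbar -> xbar j = 0.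
Proof. by rewrite inE; case: (xbar_bin j) => ->; rewrite ?eqxx. Qed.

Lemma Jo_lt_jstar j : j \in Jo xbar -> j != jstar -> u j < u jstar.
Proof. by move=> jJo j_ne; rewrite lt_neqAle u_inj ?jstar_max. Qed.

Lemma notJo_above_jstar k : u jstar < u k -> k \notin Jo xbar.
Proof. by move=> jstar_lt; apply: contraTN jstar_lt => /jstar_max; rewrite leNgt. Qed.

Lemma mu_bar_neq j : j != jstar -> mu j = 0.
Proof. by rewrite /mu /mu_bar => /negbTE ->. Qed.

Lemma mu_bar_ge0 j : 0 <= mu j.
Proof. by rewrite /mu /mu_bar; case: eqP => // _; case: pickP => *; rewrite ?posp_ge0. Qed.

Lemma nu_bar_ge0 j : 0 <= nu j.
Proof. by rewrite /nu /nu_bar; case: ifP => _; rewrite ?posp_ge0. Qed.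

Lemma nu_bar_Jo j : j \in Jo xbar -> nu j = 0.
Proof. by rewrite /nu /nu_bar => ->. Qed.

Lemma sum_mu_bar_above j :
  \sum_(k | u j < u k) mu k = if u j < u jstar then mu jstar else 0.
Proof.
case: ifP => [j_lt|j_nlt].
  by apply: big_only1 => // k /mu_bar_neq.
apply: big1 => k j_lt; apply: mu_bar_neq; apply: contraFneq j_nlt => <-.
exact: j_lt.
Qed.

Lemma r_le_mu_bar j : j \in Jo xbar -> j != jstar -> r j - r jstar <= mu jstar.
Proof.
move=> jJo j_ne; rewrite /mu /mu_bar eqxx.
have jJo' : j \in Jo xbar :\ jstar by rewrite !inE j_ne; rewrite inE in jJo.
case: pickP => [j0 _|/(_ j)]; last by rewrite jJo'.
apply: le_trans (le_posp _); rewrite lerB //.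
exact: (le_bigmax_cond _ (P := mem (Jo xbar :\ jstar))).
Qed.

Lemma DSP_feasible_bar : DSP_feasible r u (lam_bar r jstar) nu mu.
Proof.
split=> [j|j]; last by rewrite nu_bar_ge0 mu_bar_ge0.
rewrite sum_mu_bar_above /lam_bar.
have [jJo|jNJo] := boolP (j \in Jo xbar); last first.
  rewrite /nu /nu_bar (negbTE jNJo) -/mu sum_mu_bar_above.
  by have := le_posp (r j - r jstar - (if u j < u jstar then mu jstar else 0)); lra.
rewrite nu_bar_Jo // subr0; have [->|j_ne] := eqVneq j jstar.
  by rewrite ltxx subrr subr0.
by rewrite Jo_lt_jstar // subr_le0 r_le_mu_bar.
Qed.

Lemma DSP_obj_bar : DSP_obj xbar (lam_bar r jstar) nu mu = r jstar.
Proof.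
have off_jstar j : j != jstar -> (nu j - mu j) * xbar j = 0.
  move=> j_ne; rewrite mu_bar_neq // subr0.
  have [jJo|jNJo] := boolP (j \in Jo xbar); first by rewrite nu_bar_Jo // mul0r.
  by rewrite xbar_notJo // mulr0.
rewrite /DSP_obj (big_only1 jstar) // => [|j j_ne _]; last exact: mu_bar_neq.
rewrite (big_only1 jstar) // => [|j j_ne _]; last exact: off_jstar.
by rewrite nu_bar_Jo // xbar_jstar mulr1 sub0r /lam_bar addrK.
Qed.

Definition ystar (j : J) : R := (j == jstar)%:R.

Lemma SP_feasible_ystar : SP_feasible u xbar ystar.
Proof.
split=> [|j|k|j]; rewrite /ystar.
- by rewrite (big_only1 jstar) ?eqxx // => j /negbTE ->.
- by have [->|_] := eqVneq j jstar; rewrite ?xbar_jstar //; case: (xbar_bin j) => ->.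
- have [jstar_lt|jstar_nlt] := boolP (u jstar < u k).
    rewrite (big_only1 jstar) ?eqxx // => [|j /negbTE -> //].
    by rewrite xbar_notJo ?notJo_above_jstar // addr0.
  rewrite big1 ?add0r => [|j j_lt]; first by case: (xbar_bin k) => ->.
  by case: eqP j_lt => // ->; rewrite (negbTE jstar_nlt).
- by rewrite ler0n.
Qed.

Lemma SP_obj_ystar : SP_obj r ystar = r jstar.
Proof.
rewrite /SP_obj (big_only1 jstar) // => [|j j_ne _].
  by rewrite /ystar eqxx mulr1.
by rewrite /ystar (negbTE j_ne) mulr0.
Qed.

End BinaryPoint.
End ChoiceDuality.

Theorem proposition1 (R : realFieldType) (J : finType) (r u : J -> R)
  (u_inj : forall j k : J, j != k -> u j != u k)
  (xbar : J -> R) (xbar_bin : forall j, xbar j = 0 \/ xbar j = 1)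
  (Jo_ne : Jo xbar != set0)
  (jstar : J) (jstar_in : jstar \in Jo xbar)
  (jstar_max : forall j', j' \in Jo xbar -> u j' <= u jstar) :
  DSP_optimal r u xbar (lam_bar r jstar) (nu_bar r u xbar jstar)
              (mu_bar r xbar jstar)
  /\ SP_opt_value r u xbar (r jstar)
  /\ DSP_obj xbar (lam_bar r jstar) (nu_bar r u xbar jstar)
             (mu_bar r xbar jstar) = r jstar.
Proof.
have := optimal_of_eq_obj (SP_feasible_ystar (u := u) xbar_bin jstar_in jstar_max)
                          (DSP_feasible_bar r u_inj jstar_max).
rewrite DSP_obj_bar // SP_obj_ystar => /(_ erefl) [dual_opt primal_val].
by split; last split.
Qed.
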